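(* Let $f,g\colon[a,b]\to\mathbb{R}$ be integrable, with $a<b$. If either ($g$ is non-decreasing and $f\in M^+$) or ($g$ is non-increasing and $f\in M^-$), then $$\frac{1}{b-a}\int_a^b f(x)g(x)\,dx\geq \frac{1}{b-a}\int_a^b f(x)\,dx\cdot\frac{1}{b-a}\int_a^b g(x)\,dx.$$ If instead either ($g$ is non-decreasing and $f\in M^-$) or ($g$ is non-increasing and $f\in M^+$), then the reverse inequality $\le$ holds.
   Context: An integrable function $f\colon[a,b]\to\mathbb{R}$ belongs to the class $M^+$ if there is a $c\in[a,b]$ such that: (1) if $f(x)<\frac{1}{b-a}\int_a^b f(t)\,dt$ then $x<c$, and (2) if $f(x)>\frac{1}{b-a}\int_a^b f(t)\,dt$ then $x>c$. It belongs to the class $M^-$ if there is a $c\in[a,b]$ such that: (1) if $f(x)<\frac{1}{b-a}\int_a^b f(t)\,dt$ then $x>c$, and (2) if $f(x)>\frac{1}{b-a}\int_a^b f(t)\,dt$ then $x<c$. *)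

From Stdlib Require Import Reals.
From Coquelicot Require Import Coquelicot.
Open Scope R_scope.

Definition mean (f : R -> R) (a b : R) : R := RInt f a b / (b - a).

Definition M_plus (f : R -> R) (a b : R) : Prop :=
  exists c, a <= c <= b /\
    forall x, a <= x <= b ->
      (f x < mean f a b -> x < c) /\ (f x > mean f a b -> x > c).

Definition M_minus (f : R -> R) (a b : R) : Prop :=
  exists c, a <= c <= b /\
    forall x, a <= x <= b ->
      (f x < mean f a b -> x > c) /\ (f x > mean f a b -> x < c).

Definition nondecr_on (g : R -> R) (a b : R) : Prop :=
  forall x y, a <= x -> x <= y -> y <= b -> g x <= g y.

Definition nonincr_on (g : R -> R) (a b : R) : Prop :=
  forall x y, a <= x -> x <= y -> y <= b -> g y <= g x.

(** Centring [f] at its mean [m] gives, for every constant [k],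
    [mean (f g) - mean f * mean g = mean ((f - m) (g - k))], because [f - m]
    has mean zero.  Take [k = g c], where [c] is the point of the class
    [M^+]/[M^-] at which [f] crosses its mean: then [f x - m] and [g x - g c]
    have the same sign (or opposite signs) for every [x], since [f - m] changes
    sign only at [c] and [g] is monotone.  The product [(f - m) (g - g c)] is
    therefore of constant sign, and so is its mean.  The only analytic
    ingredient is the Riemann integrability of the product [f g]. *)

From Stdlib Require Import Reals Lra Lia.
From Coquelicot Require Import Coquelicot.
Open Scope R_scope.

Definition clamp (M v : R) : R := Rmax (- M) (Rmin M v).

Lemma clamp_id (M v : R) : - M <= v <= M -> clamp M v = v.
Proof.
  intros Hv; unfold clamp.
  rewrite Rmin_right by lra; rewrite Rmax_right by lra; reflexivity.
Qed.

Lemma clamp_bound (M v : R) : 0 <= M -> - M <= clamp M v <= M.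
Proof.
  intros HM; unfold clamp, Rmax, Rmin.
  repeat destruct Rle_dec; lra.
Qed.

Lemma clamp_contraction (M u v : R) : Rabs (clamp M u - clamp M v) <= Rabs (u - v).
Proof.
  unfold clamp, Rmax, Rmin.
  repeat destruct Rle_dec; unfold Rabs; repeat destruct Rcase_abs; lra.
Qed.

Lemma sqr_clamp_Lipschitz (M u v : R) : 0 <= M ->
  Rabs (clamp M u * clamp M u - clamp M v * clamp M v) <= 2 * M * Rabs (u - v).
Proof.
  intros HM.
  destruct (clamp_bound M u HM), (clamp_bound M v HM).
  replace (clamp M u * clamp M u - clamp M v * clamp M v)
    with ((clamp M u + clamp M v) * (clamp M u - clamp M v)) by ring.
  rewrite Rabs_mult.
  apply Rmult_le_compat; try apply Rabs_pos.
  - apply Rabs_le; lra.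
  - apply clamp_contraction.
Qed.

Lemma IsStepFun_comp (F : R -> R) (a b : R) (phi : StepFun a b) :
  IsStepFun (fun x => F (phi x)) a b.
Proof.
  destruct phi as [phi [l [lf (Hord & Hmin & Hmax & Hlen & Hconst)]]]; cbn.
  exists l, (List.map F lf).
  repeat split; auto.
  - rewrite List.length_map; exact Hlen.
  - intros i Hi x Hx.
    rewrite (Hconst i Hi x Hx), RList.RList_P12; [reflexivity|].
    rewrite Hlen in Hi; cbn in Hi; lia.
Qed.

Lemma Riemann_integrable_comp_Lipschitz (F h : R -> R) (a b L : R) :
  0 <= L -> (forall u v, Rabs (F u - F v) <= L * Rabs (u - v)) ->
  Riemann_integrable h a b -> Riemann_integrable (fun x => F (h x)) a b.
Proof.
  intros HL HF Hh eps.
  assert (Heps : 0 < eps / (1 + L)).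
  { apply Rdiv_lt_0_compat; [apply cond_pos | lra]. }
  destruct (Hh (mkposreal _ Heps)) as [phi [psi [Happrox Hsmall]]].
  exists (mkStepFun (IsStepFun_comp F a b phi)), (mkStepFun (StepFun_P28 L psi psi)).
  split.
  - intros t Ht; cbn.
    specialize (Happrox t Ht).
    assert (0 <= psi t) by (eapply Rle_trans; [apply Rabs_pos | exact Happrox]).
    assert (L * Rabs (h t - phi t) <= L * psi t) by (apply Rmult_le_compat_l; assumption).
    specialize (HF (h t) (phi t)); lra.
  - rewrite StepFun_P30.
    replace (RiemannInt_SF psi + L * RiemannInt_SF psi)
      with ((1 + L) * RiemannInt_SF psi) by ring.
    rewrite Rabs_mult, (Rabs_right (1 + L)) by lra.
    cbn in Hsmall.
    apply Rmult_lt_compat_l with (r := 1 + L) in Hsmall; [|lra].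
    replace ((1 + L) * (eps / (1 + L))) with (pos eps) in Hsmall by (field; lra).
    exact Hsmall.
Qed.

(* The approximating step functions need not be bounded by [M], so squaring is
   applied through [clamp M], which is globally Lipschitz and agrees with the
   square on the range of [h]. *)
Lemma Riemann_integrable_sqr_bounded (h : R -> R) (a b M : R) :
  (forall x, Rmin a b <= x <= Rmax a b -> - M <= h x <= M) ->
  Riemann_integrable h a b -> Riemann_integrable (fun x => h x * h x) a b.
Proof.
  intros Hbound Hh.
  assert (HM : 0 <= M).
  { assert (Ha : Rmin a b <= a <= Rmax a b) by (split; [apply Rmin_l | apply Rmax_l]).
    specialize (Hbound a Ha); lra. }
  apply (Riemann_integrable_ext (fun x => clamp M (h x) * clamp M (h x))).
  - intros x Hx; rewrite clamp_id by (apply Hbound; exact Hx); reflexivity.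
  - apply (Riemann_integrable_comp_Lipschitz (fun v => clamp M v * clamp M v) h a b (2 * M));
      [lra | intros u v; apply sqr_clamp_Lipschitz; exact HM | exact Hh].
Qed.

Lemma ex_RInt_sqr (h : R -> R) (a b : R) :
  ex_RInt h a b -> ex_RInt (fun x => h x * h x) a b.
Proof.
  intros Hh%ex_RInt_Reals_0.
  destruct (Riemann_integrable_bound h a b Hh) as [s Hs].
  destruct (Riemann_integrable_bound _ a b (Riemann_integrable_opp h a b Hh)) as [s' Hs'].
  apply ex_RInt_Reals_1, (Riemann_integrable_sqr_bounded h a b (Rmax s s')); [|exact Hh].
  intros x Hx; specialize (Hs x Hx); specialize (Hs' x Hx).
  pose proof (Rmax_l s s'); pose proof (Rmax_r s s'); lra.
Qed.

Lemma ex_RInt_mult (f g : R -> R) (a b : R) :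
  ex_RInt f a b -> ex_RInt g a b -> ex_RInt (fun x => f x * g x) a b.
Proof.
  intros Hf%ex_RInt_Reals_0 Hg%ex_RInt_Reals_0.
  pose proof (ex_RInt_sqr _ a b (ex_RInt_Reals_1 _ a b (Riemann_integrable_plus f g a b Hf Hg)))
    as Hsum%ex_RInt_Reals_0.
  pose proof (ex_RInt_sqr _ a b (ex_RInt_Reals_1 _ a b (Riemann_integrable_minus f g a b Hf Hg)))
    as Hdiff%ex_RInt_Reals_0.
  apply ex_RInt_Reals_1.
  apply (Riemann_integrable_ext (fun x => / 4 * ((f x + g x) * (f x + g x) - (f x - g x) * (f x - g x)))).
  - intros x _; field.
  - apply Riemann_integrable_scal, Riemann_integrable_minus; assumption.
Qed.

Lemma is_RInt_shifted_mult (f g : R -> R) (a b m k If Ig Ifg : R) :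
  is_RInt f a b If -> is_RInt g a b Ig -> is_RInt (fun x => f x * g x) a b Ifg ->
  is_RInt (fun x => (f x - m) * (g x - k)) a b
    (Ifg - k * If - m * Ig + (b - a) * (m * k)).
Proof.
  intros Hf Hg Hfg.
  pose proof (is_RInt_plus _ _ a b _ _
     (is_RInt_minus _ _ a b _ _ Hfg (is_RInt_scal _ a b k _ Hf))
     (is_RInt_minus _ _ a b _ _ (is_RInt_const a b (m * k)) (is_RInt_scal _ a b m _ Hg)))
    as H.
  cbv [plus minus opp scal mult] in H; simpl in H.
  replace (Ifg - k * If - m * Ig + (b - a) * (m * k))
    with (Ifg + - (k * If) + ((b - a) * (m * k) + - (m * Ig))) by ring.
  revert H; apply is_RInt_ext; intros x _; unfold mult; simpl; ring.
Qed.

Lemma ex_RInt_shifted_mult (f g : R -> R) (a b m k : R) :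
  ex_RInt f a b -> ex_RInt g a b -> ex_RInt (fun x => (f x - m) * (g x - k)) a b.
Proof.
  intros Hf Hg.
  apply ex_RInt_mult; apply (ex_RInt_minus (V := R_NormedModule)); auto; apply ex_RInt_const.
Qed.

Lemma mean_const (c a b : R) : a <> b -> mean (fun _ => c) a b = c.
Proof.
  intros Hab; unfold mean.
  rewrite RInt_const; unfold scal; simpl; unfold mult; simpl.
  field; lra.
Qed.

Lemma mean_le (h1 h2 : R -> R) (a b : R) :
  a < b -> ex_RInt h1 a b -> ex_RInt h2 a b ->
  (forall x, a <= x <= b -> h1 x <= h2 x) -> mean h1 a b <= mean h2 a b.
Proof.
  intros Hab H1 H2 Hle; unfold mean, Rdiv.
  apply Rmult_le_compat_r; [apply Rlt_le, Rinv_0_lt_compat; lra|].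
  apply RInt_le; auto; [lra|].
  intros x Hx; apply Hle; lra.
Qed.

(* Since [f - mean f] has mean zero, the constant [k] drops out. *)
Lemma mean_mult_sub_mean_mult (f g : R -> R) (a b k : R) :
  a <> b -> ex_RInt f a b -> ex_RInt g a b ->
  mean (fun x => f x * g x) a b - mean f a b * mean g a b
  = mean (fun x => (f x - mean f a b) * (g x - k)) a b.
Proof.
  intros Hab Hf Hg.
  pose proof (is_RInt_shifted_mult f g a b (mean f a b) k _ _ _
    (RInt_correct (V := R_CompleteNormedModule) _ _ _ Hf)
    (RInt_correct (V := R_CompleteNormedModule) _ _ _ Hg)
    (RInt_correct (V := R_CompleteNormedModule) _ _ _ (ex_RInt_mult f g a b Hf Hg))) as H.
  unfold mean at 4; rewrite (is_RInt_unique _ _ _ _ H).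
  unfold mean; field; lra.
Qed.

Lemma mean_mult_ge (f g : R -> R) (a b k : R) :
  a < b -> ex_RInt f a b -> ex_RInt g a b ->
  (forall x, a <= x <= b -> 0 <= (f x - mean f a b) * (g x - k)) ->
  mean (fun x => f x * g x) a b >= mean f a b * mean g a b.
Proof.
  intros Hab Hf Hg Hsign.
  pose proof (mean_mult_sub_mean_mult f g a b k ltac:(lra) Hf Hg) as Hcov.
  pose proof (mean_le _ _ a b Hab (ex_RInt_const a b 0)
    (ex_RInt_shifted_mult f g a b (mean f a b) k Hf Hg) Hsign) as Hle.
  rewrite mean_const in Hle by lra.
  lra.
Qed.

Lemma mean_mult_le (f g : R -> R) (a b k : R) :
  a < b -> ex_RInt f a b -> ex_RInt g a b ->
  (forall x, a <= x <= b -> (f x - mean f a b) * (g x - k) <= 0) ->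
  mean (fun x => f x * g x) a b <= mean f a b * mean g a b.
Proof.
  intros Hab Hf Hg Hsign.
  pose proof (mean_mult_sub_mean_mult f g a b k ltac:(lra) Hf Hg) as Hcov.
  pose proof (mean_le _ _ a b Hab (ex_RInt_shifted_mult f g a b (mean f a b) k Hf Hg)
    (ex_RInt_const a b 0) Hsign) as Hle.
  rewrite mean_const in Hle by lra.
  lra.
Qed.

Lemma Rmult_nonneg_same_sign (d e : R) :
  (d < 0 -> e <= 0) -> (0 < d -> 0 <= e) -> 0 <= d * e.
Proof. intros Hneg Hpos; destruct (Rtotal_order d 0) as [Hd | [-> | Hd]]; nra. Qed.

Lemma Rmult_nonpos_opposite_sign (d e : R) :
  (d < 0 -> 0 <= e) -> (0 < d -> e <= 0) -> d * e <= 0.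
Proof. intros Hneg Hpos; destruct (Rtotal_order d 0) as [Hd | [-> | Hd]]; nra. Qed.

Lemma M_plus_nondecr_sign (f g : R -> R) (a b : R) :
  M_plus f a b -> nondecr_on g a b ->
  exists k, forall x, a <= x <= b -> 0 <= (f x - mean f a b) * (g x - k).
Proof.
  intros [c [Hc Hf]] Hg; exists (g c); intros x Hx.
  destruct (Hf x Hx) as [Hlt Hgt].
  apply Rmult_nonneg_same_sign; intros Hd.
  - assert (x < c) by (apply Hlt; lra); assert (g x <= g c) by (apply Hg; lra); lra.
  - assert (c < x) by (apply Hgt; lra); assert (g c <= g x) by (apply Hg; lra); lra.
Qed.

Lemma M_minus_nonincr_sign (f g : R -> R) (a b : R) :
  M_minus f a b -> nonincr_on g a b ->
  exists k, forall x, a <= x <= b -> 0 <= (f x - mean f a b) * (g x - k).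
Proof.
  intros [c [Hc Hf]] Hg; exists (g c); intros x Hx.
  destruct (Hf x Hx) as [Hlt Hgt].
  apply Rmult_nonneg_same_sign; intros Hd.
  - assert (c < x) by (apply Hlt; lra); assert (g x <= g c) by (apply Hg; lra); lra.
  - assert (x < c) by (apply Hgt; lra); assert (g c <= g x) by (apply Hg; lra); lra.
Qed.

Lemma M_minus_nondecr_sign (f g : R -> R) (a b : R) :
  M_minus f a b -> nondecr_on g a b ->
  exists k, forall x, a <= x <= b -> (f x - mean f a b) * (g x - k) <= 0.
Proof.
  intros [c [Hc Hf]] Hg; exists (g c); intros x Hx.
  destruct (Hf x Hx) as [Hlt Hgt].
  apply Rmult_nonpos_opposite_sign; intros Hd.
  - assert (c < x) by (apply Hlt; lra); assert (g c <= g x) by (apply Hg; lra); lra.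
  - assert (x < c) by (apply Hgt; lra); assert (g x <= g c) by (apply Hg; lra); lra.
Qed.

Lemma M_plus_nonincr_sign (f g : R -> R) (a b : R) :
  M_plus f a b -> nonincr_on g a b ->
  exists k, forall x, a <= x <= b -> (f x - mean f a b) * (g x - k) <= 0.
Proof.
  intros [c [Hc Hf]] Hg; exists (g c); intros x Hx.
  destruct (Hf x Hx) as [Hlt Hgt].
  apply Rmult_nonpos_opposite_sign; intros Hd.
  - assert (x < c) by (apply Hlt; lra); assert (g c <= g x) by (apply Hg; lra); lra.
  - assert (c < x) by (apply Hgt; lra); assert (g x <= g c) by (apply Hg; lra); lra.
Qed.

Theorem theorem4 (f g : R -> R) (a b : R) :
  a < b -> ex_RInt f a b -> ex_RInt g a b ->
  ((nondecr_on g a b /\ M_plus f a b) \/ (nonincr_on g a b /\ M_minus f a b) ->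
     mean (fun x => f x * g x) a b >= mean f a b * mean g a b) /\
  ((nondecr_on g a b /\ M_minus f a b) \/ (nonincr_on g a b /\ M_plus f a b) ->
     mean (fun x => f x * g x) a b <= mean f a b * mean g a b).
Proof.
  intros Hab Hf Hg; split.
  - intros [[Hmono HM] | [Hmono HM]];
      [ destruct (M_plus_nondecr_sign f g a b HM Hmono) as [k Hk]
      | destruct (M_minus_nonincr_sign f g a b HM Hmono) as [k Hk] ];
      exact (mean_mult_ge f g a b k Hab Hf Hg Hk).
  - intros [[Hmono HM] | [Hmono HM]];
      [ destruct (M_minus_nondecr_sign f g a b HM Hmono) as [k Hk]
      | destruct (M_plus_nonincr_sign f g a b HM Hmono) as [k Hk] ];
      exact (mean_mult_le f g a b k Hab Hf Hg Hk).
Qed.
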